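(* Let $\gamma:=2\Delta\lambda\max\{\lambda,\mu\}$, $\beta:=(4\Delta\lambda\gamma)^d$ and $\epsilon>0$. For every $v\in V$ let $\mathfrak a'_v:\mathbb R\to\mathbb R$ be an $\epsilon$-approximation of $\mathfrak a_v$ that is Lipschitz continuous with constant $2\lambda$, and let $\mathfrak A':=(V,E,(\mathfrak a'_v)_{v\in V})$. Then for all $\mathbf x\in\mathbb R^p$, $\mathbf b\in\mathbb R^V$ and $\mathbf w\in\mathbb R^E$, $$\|\mathfrak A(\mathbf x,\mathbf w,\mathbf b)-\mathfrak A'(\mathbf x,\mathbf w,\mathbf b)\|_\infty\le\beta(\|\mathbf w\|_\infty+1)^d(\|\mathbf x\|_\infty+\|\mathbf b\|_\infty+1)\epsilon.$$
   Context: $\mathfrak A=(V,E,(\mathfrak a_v)_{v\in V})$ is an FNN architecture: $(V,E)$ is a finite dag and each $\mathfrak a_v:\mathbb R\to\mathbb R$ is Lipschitz continuous. Sources are input nodes $X_1,\dots,X_p$, sinks are output nodes. For an architecture $\mathfrak B$ with activations $\mathfrak b_v$ on the same dag, $f_{\mathfrak B,X_i}(\mathbf x,\mathbf w,\mathbf b)=x_i$ and for non-input $v$, $f_{\mathfrak B,v}(\mathbf x,\mathbf w,\mathbf b)=\mathfrak b_v\big(b_v+\sum_{u:uv\in E}f_{\mathfrak B,u}(\mathbf x,\mathbf w,\mathbf b)w_{uv}\big)$; $\mathfrak B(\mathbf x,\mathbf w,\mathbf b)$ is the tuple of values at the outputs. $d$ is the depth of the dag, $\Delta\ge1$ its maximum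 in-degree, $\lambda\in\mathbb N_{>0}$ a Lipschitz constant of all $\mathfrak a_v$, $\mu=\max_v\lceil|\mathfrak a_v(0)|\rceil$. A function $g$ is an $\epsilon$-approximation of $f$ if $|f(x)-g(x)|\le\epsilon|f(x)|+\epsilon$ for all $x\in\mathbb R$. *)

From HB Require Import structures.
From mathcomp Require Import all_boot all_order all_algebra.
From mathcomp Require Import reals.
Set Implicit Arguments. Unset Strict Implicit. Unset Printing Implicit Defensive.
Import Order.TTheory GRing.Theory Num.Theory.
Local Open Scope ring_scope.

Section FNN.
Variable R : realType.
Variable V : finType.
Variable E : rel V.

Definition acyclic : Prop :=
  forall (v : V) (s : seq V), path E v s -> s != [::] -> last v s != v.

Definition is_depth (d : nat) : Prop :=
  (forall (v : V) (s : seq V), path E v s -> (size s <= d)%N) /\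
  (exists (v : V) (s : seq V), path E v s /\ size s = d).

Definition maxindeg : nat := \max_(v : V) #|[set u | E u v]|.

Definition is_source (v : V) : bool := [forall u, ~~ E u v].
Definition is_sink (v : V) : bool := [forall u, ~~ E v u].

Definition lipschitz (L : R) (f : R -> R) : Prop :=
  forall x y, `|f x - f y| <= L * `|x - y|.

Definition eps_approx (eps : R) (f g : R -> R) : Prop :=
  forall x, `|f x - g x| <= eps * `|f x| + eps.

Definition mu_of (a : V -> R -> R) : nat :=
  \max_(v : V) absz (Num.ceil `|a v 0%R|).

Definition input_val (p : nat) (X : 'I_p -> V) (x : 'I_p -> R) (v : V) : R :=
  match [pick i | X i == v] with Some i => x i | None => 0 end.

(* f_{B,v}(x,w,b), computed with fuel n; fuel #|V| exceeds the depth of any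
   node of an acyclic graph, so [fnn_eval] is the value of the paper. *)
Fixpoint fnn_eval_fuel (n : nat) (a : V -> R -> R) (xin : V -> R)
    (w : V -> V -> R) (b : V -> R) (v : V) : R :=
  match n with
  | 0 => 0
  | n'.+1 =>
      if is_source v then xin v
      else a v (b v + \sum_(u | E u v) fnn_eval_fuel n' a xin w b u * w u v)
  end.

Definition fnn_eval (p : nat) (X : 'I_p -> V) (a : V -> R -> R)
    (x : 'I_p -> R) (w : V -> V -> R) (b : V -> R) (v : V) : R :=
  fnn_eval_fuel #|V| a (input_val X x) w b v.

Definition norm_inp (p : nat) (x : 'I_p -> R) : R := \big[Num.max/0]_(i < p) `|x i|.
Definition norm_node (b : V -> R) : R := \big[Num.max/0]_(v : V) `|b v|.
Definition norm_edge (w : V -> V -> R) : R :=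
  \big[Num.max/0]_(uv : V * V | E uv.1 uv.2) `|w uv.1 uv.2|.

End FNN.

From HB Require Import structures.
From mathcomp Require Import all_boot all_order all_algebra reals.
From mathcomp Require Import ring lra.
Set Implicit Arguments. Unset Strict Implicit.
Import Order.TTheory GRing.Theory Num.Theory.
Local Open Scope ring_scope.

(* Write M = |x| + |b| + 1, m = max(lam, mu) and T = lam Delta (|w| + 1), and call
   height of a node the length of the longest path ending at it.  Since
   |a(z)| <= lam |z| + m, the value at a node of height k is at most m M T^k.  The
   error at a node splits as |a(z) - a'(z)| + |a'(z) - a'(z')|
   <= eps (|a(z)| + 1) + 2 lam |z - z'|, where z - z' is the weighted sum of the
   errors at the predecessors; by induction the error at height k is at most
   2 eps m M (4T)^k.  Every node has height at most d, and 2 m <= (2 Delta lam m)^d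
   as soon as d >= 1, which yields the constant beta. *)

Section Height.
Variables (V : finType) (E : rel V).

Definition height_le (v : V) (k : nat) : Prop :=
  forall u s, path E u s -> last u s = v -> (size s <= k)%N.

Lemma height_le_pred v k u : height_le v k.+1 -> E u v -> height_le u k.
Proof.
move=> hv e u' s ps ls; have := hv u' (rcons s v).
by rewrite rcons_path ps ls e last_rcons size_rcons; apply.
Qed.

Lemma height_le0_no_pred v u : height_le v 0 -> ~~ E u v.
Proof.
move=> hv; apply/negP => e; have /= := hv u [:: v].
by rewrite e andbT => /(_ isT erefl).
Qed.

Lemma depth_height_le d v : is_depth E d -> height_le v d.
Proof. by move=> [hd _] u s ps _; exact: hd ps. Qed.

Lemma depth_gt0 d : is_depth E d -> (0 < maxindeg E)%N -> (0 < d)%N.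
Proof.
move=> hd; rewrite !lt0n; apply: contra_neq => d0; apply/eqP; rewrite -leqn0.
apply/bigmax_leqP => v _; rewrite leqn0 cards_eq0; apply/eqP/setP => u.
by rewrite !inE; apply/negbTE/height_le0_no_pred; rewrite -d0; exact: depth_height_le.
Qed.

End Height.

Lemma norm_lipschitz_le (R : realType) (L : R) (f : R -> R) z :
  lipschitz L f -> `|f z| <= L * `|z| + `|f 0|.
Proof.
move=> hf; rewrite -[f z](subrK (f 0)); apply: le_trans (ler_normD _ _) _.
by rewrite lerD2r; have := hf z 0; rewrite subr0.
Qed.

Lemma norm_approx_lipschitz_le (R : realType) (eps L : R) (f g : R -> R) z z' :
  eps_approx eps f g -> lipschitz L g ->
  `|f z - g z'| <= eps * `|f z| + eps + L * `|z - z'|.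
Proof.
move=> hfg hg; have -> : f z - g z' = (f z - g z) + (g z - g z') by ring.
by apply: le_trans (ler_normD _ _) _; apply: lerD.
Qed.

Section Bounds.
Variables (R : realType) (V : finType) (E : rel V).
Variables (a a' : V -> R -> R) (xin : V -> R) (w : V -> V -> R) (b : V -> R).
Variables (lam m Dl W Nx Nb eps : R).
Hypotheses (lam_ge1 : 1 <= lam) (lam_le_m : lam <= m) (Dl_ge1 : 1 <= Dl)
  (W_ge0 : 0 <= W) (Nx_ge0 : 0 <= Nx) (Nb_ge0 : 0 <= Nb) (eps_gt0 : 0 < eps).
Hypothesis lip_a : forall v, lipschitz lam (a v).
Hypothesis approx_a' : forall v, eps_approx eps (a v) (a' v).
Hypothesis lip_a' : forall v, lipschitz (2 * lam) (a' v).
Hypothesis norm_a0 : forall v, `|a v 0| <= m.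
Hypothesis norm_xin : forall v, `|xin v| <= Nx.
Hypothesis norm_b : forall v, `|b v| <= Nb.
Hypothesis norm_w : forall u v, E u v -> `|w u v| <= W.
Hypothesis indeg_le : forall v, (#|[set u | E u v]|)%:R <= Dl.

Let M := Nx + Nb + 1.
Let T := lam * Dl * (W + 1).
Local Notation f n := (fnn_eval_fuel E n a xin w b).
Local Notation f' n := (fnn_eval_fuel E n a' xin w b).

Lemma norm_weighted_pred_sum_le (g : V -> R) c v :
  0 <= c -> (forall u, E u v -> `|g u| <= c) ->
  `|\sum_(u | E u v) g u * w u v| <= Dl * W * c.
Proof.
move=> c0 hg; apply: le_trans (ler_norm_sum _ _ _) _.
apply: (@le_trans _ _ (\sum_(u | E u v) c * W)).
  by apply: ler_sum => u e; rewrite normrM ler_pM ?hg ?norm_w.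
rewrite sumr_const -cardsE -mulr_natl.
by have := indeg_le v; have := mulr_ge0 c0 W_ge0; nra.
Qed.

Lemma sum_pred_height0 (g : V -> R) v :
  height_le E v 0 -> \sum_(u | E u v) g u = 0.
Proof. by move=> hv; rewrite big_pred0 // => u; apply/negbTE/height_le0_no_pred. Qed.

Lemma mM_ge1 : 1 <= m * M.
Proof. by move: lam_ge1 lam_le_m Nx_ge0 Nb_ge0; rewrite /M; nra. Qed.

Lemma lamDl_ge1 : 1 <= lam * Dl.
Proof. exact: mulr_ege1. Qed.

Lemma T_ge1 : 1 <= T.
Proof. by rewrite /T mulr_ege1 ?lamDl_ge1 // lerDr. Qed.

Lemma mMT_ge1 k : 1 <= m * M * T ^+ k.
Proof. by rewrite mulr_ege1 ?mM_ge1 ?exprn_ege1 ?T_ge1. Qed.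

Lemma norm_fnn_eval_fuel_le n v k :
  height_le E v k -> `|f n v| <= m * M * T ^+ k.
Proof.
have Tk_ge1 j : 1 <= T ^+ j by apply: exprn_ege1; exact: T_ge1.
have mM_le j : m * M <= m * M * T ^+ j.
  by rewrite ler_peMr ?Tk_ge1 // (le_trans ler01 mM_ge1).
elim: n v k => [|n IH] v k hv /=.
  by rewrite normr0 (le_trans ler01 (mMT_ge1 k)).
case: ifP => _.
  apply: le_trans (norm_xin v) (le_trans _ (mM_le k)).
  by move: lam_ge1 lam_le_m Nx_ge0 Nb_ge0; rewrite /M; nra.
set s := \sum_(u | _) _; apply: le_trans (norm_lipschitz_le _ (lip_a v)) _.
have hz : lam * `|b v + s| <= lam * Nb + lam * `|s|.
  rewrite -mulrDr ler_wpM2l ?(le_trans (ler_normD _ _)) ?lerD2r ?norm_b //.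
  by move: lam_ge1; lra.
have base : lam * Nb + m <= m * M.
  by rewrite /M; move: lam_ge1 lam_le_m Nx_ge0 Nb_ge0; nra.
have := norm_a0 v; case: k hv => [|k] hv.
  by rewrite /s sum_pred_height0 // addr0 normr0 mulr0 addr0 expr0 mulr1 in hz *; lra.
have hs : `|s| <= Dl * W * (m * M * T ^+ k).
  apply: norm_weighted_pred_sum_le => [|u e]; first by have := mMT_ge1 k; lra.
  exact/IH/(height_le_pred hv).
have hsl : lam * `|s| <= lam * (Dl * W * (m * M * T ^+ k)).
  by rewrite ler_wpM2l //; move: lam_ge1; lra.
have grow : m * M <= m * M * (lam * Dl * T ^+ k).
  by rewrite ler_peMr ?mulr_ege1 ?lamDl_ge1 ?Tk_ge1 // (le_trans ler01 mM_ge1).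
have -> : m * M * T ^+ k.+1
    = m * M * (lam * Dl * T ^+ k) + lam * (Dl * W * (m * M * T ^+ k)).
  by rewrite exprS /T; ring.
lra.
Qed.

Lemma fnn_eval_fuel_diff_le n v k :
  height_le E v k -> `|f n v - f' n v| <= 2 * eps * (m * M * (4 * T) ^+ k).
Proof.
have mM0 : 0 <= m * M := le_trans ler01 mM_ge1.
have T0 : 0 <= T := le_trans ler01 T_ge1.
have bound_ge0 j : 0 <= 2 * eps * (m * M * (4 * T) ^+ j) :=
  mulr_ge0 (mulr_ge0 (ler0n _ 2) (ltW eps_gt0))
    (mulr_ge0 mM0 (exprn_ge0 _ (mulr_ge0 (ler0n _ 4) T0))).
elim: n v k => [|n IH] v k hv /=; first by rewrite subrr normr0.
case: ifP => hsrc; first by rewrite subrr normr0.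
set s := \sum_(u | E u v) fnn_eval_fuel E n a xin w b u * w u v.
set s' := \sum_(u | E u v) fnn_eval_fuel E n a' xin w b u * w u v.
have hA := norm_fnn_eval_fuel_le n.+1 hv; rewrite /= hsrc -/s in hA.
apply: le_trans (norm_approx_lipschitz_le _ _ (approx_a' v) (lip_a' v)) _.
have -> : b v + s - (b v + s') =
    \sum_(u | E u v) (f n u - f' n u) * w u v.
  by rewrite opprD addrACA subrr add0r -sumrB; apply: eq_bigr => u _; rewrite mulrBl.
set A := `|a v (b v + s)| in hA *.
have hA1 : eps * A + eps <= 2 * eps * (m * M * T ^+ k).
  by move: eps_gt0 (mMT_ge1 k); nra.
case: k hv hA hA1 => [|k] hv hA hA1.
  by rewrite sum_pred_height0 // normr0 mulr0 addr0 expr0 mulr1 in hA1 *.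
have hS : `|\sum_(u | E u v) (f n u - f' n u) * w u v|
    <= Dl * W * (2 * eps * (m * M * (4 * T) ^+ k)).
  apply: norm_weighted_pred_sum_le => // u e; exact/IH/(height_le_pred hv).
have hlS : 2 * lam * `|\sum_(u | E u v) (f n u - f' n u) * w u v|
    <= eps * (m * M * (4 * T) ^+ k.+1).
  have lamDlW_le : lam * Dl * W <= T.
    by rewrite /T ler_wpM2l ?lerDl // (le_trans ler01 lamDl_ge1).
  have -> : eps * (m * M * (4 * T) ^+ k.+1)
      = 2 * T * (2 * eps * (m * M * (4 * T) ^+ k)).
    by rewrite exprS; ring.
  apply: le_trans (ler_wpM2l _ hS) _; first by move: lam_ge1; lra.
  by move: (bound_ge0 k); nra.
have hT : 2 * (m * M * T ^+ k.+1) <= m * M * (4 * T) ^+ k.+1.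
  have h4 : 1 <= (4 : R) ^+ k by apply: exprn_ege1; lra.
  have -> : m * M * (4 * T) ^+ k.+1 = 4 * 4 ^+ k * (m * M * T ^+ k.+1).
    by rewrite exprMn exprS; ring.
  by rewrite ler_wpM2r ?(le_trans ler01 (mMT_ge1 _)) //; lra.
by move: eps_gt0; nra.
Qed.
End Bounds.

Section Norms.
Variables (R : realType) (V : finType) (E : rel V).

Lemma norm_inp_ge0 p (x : 'I_p -> R) : 0 <= norm_inp x.
Proof. exact: bigmax_ge_id. Qed.

Lemma norm_node_ge0 (b : V -> R) : 0 <= norm_node b.
Proof. exact: bigmax_ge_id. Qed.

Lemma norm_edge_ge0 (w : V -> V -> R) : 0 <= norm_edge E w.
Proof. exact: bigmax_ge_id. Qed.

Lemma norm_input_val_le p (X : 'I_p -> V) (x : 'I_p -> R) v :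
  `|input_val X x v| <= norm_inp x.
Proof.
rewrite /input_val; case: pickP => [i _|_]; first exact: le_bigmax_cond.
by rewrite normr0 norm_inp_ge0.
Qed.

Lemma norm_node_ge (b : V -> R) v : `|b v| <= norm_node b.
Proof. exact: le_bigmax_cond. Qed.

Lemma norm_edge_ge (w : V -> V -> R) u v : E u v -> `|w u v| <= norm_edge E w.
Proof.
exact: (@le_bigmax_cond _ _ _ 0 (u, v) (fun uv : V * V => E uv.1 uv.2)
  (fun uv => `|w uv.1 uv.2|)).
Qed.

Lemma card_preds_le_maxindeg v : (#|[set u | E u v]| <= maxindeg E)%N.
Proof. exact: (leq_bigmax (F := fun v => #|[set u | E u v]|)). Qed.

Lemma norm_at0_le_mu (a : V -> R -> R) v : `|a v 0| <= (mu_of a)%:R.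
Proof.
have c0 : 0 <= Num.ceil `|a v 0| by rewrite ceil_ge0 (lt_le_trans (ltrN10 _)).
apply: le_trans (ceil_ge _) _; rewrite -(gez0_abs c0) -natr_absz ler_nat.
exact: (leq_bigmax (F := fun v => absz (Num.ceil `|a v 0|))).
Qed.

End Norms.

Lemma error_bound_le_beta (R : realFieldType) (D L m W1 M eps : R) d :
  (0 < d)%N -> 1 <= D -> 1 <= L -> L <= m -> 0 <= W1 -> 0 <= M -> 0 < eps ->
  2 * eps * (m * M * (4 * (L * D * W1)) ^+ d)
    <= (4 * D * L * (2 * D * L * m)) ^+ d * W1 ^+ d * M * eps.
Proof.
move=> d_gt0 D_ge1 L_ge1 L_le_m W1_ge0 M_ge0 eps_gt0.
have DL_ge1 : 1 <= D * L by exact: mulr_ege1.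
have two_m_le : 2 * m <= (2 * D * L * m) ^+ d.
  by apply: (le_trans _ (ler_eXnr d_gt0 _)); nra.
have Z_ge0 : 0 <= eps * M * (4 * L * D) ^+ d * W1 ^+ d.
  by rewrite !mulr_ge0 ?exprn_ge0 ?mulr_ge0 ?(ltW eps_gt0) //; lra.
have -> : 2 * eps * (m * M * (4 * (L * D * W1)) ^+ d) =
    2 * m * (eps * M * (4 * L * D) ^+ d * W1 ^+ d) by rewrite !exprMn; ring.
have -> : (4 * D * L * (2 * D * L * m)) ^+ d * W1 ^+ d * M * eps =
    (2 * D * L * m) ^+ d * (eps * M * (4 * L * D) ^+ d * W1 ^+ d).
  by rewrite !exprMn; ring.
exact: ler_wpM2r.
Qed.

Theorem lemma6p8 (R : realType) (V : finType) (E : rel V) (p : nat)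
    (X : 'I_p -> V) (a a' : V -> R -> R) (d lam : nat) (eps : R) :
  acyclic E ->
  injective X ->
  (forall v, is_source E v <-> exists i, X i = v) ->
  is_depth E d ->
  (1 <= maxindeg E)%N ->
  (0 < lam)%N ->
  (forall v, lipschitz lam%:R (a v)) ->
  0 < eps ->
  (forall v, eps_approx eps (a v) (a' v)) ->
  (forall v, lipschitz (2 * lam%:R) (a' v)) ->
  let gamma := (2 * maxindeg E * lam * maxn lam (mu_of a))%N in
  let beta := ((4 * maxindeg E * lam * gamma) ^ d)%N in
  forall (x : 'I_p -> R) (b : V -> R) (w : V -> V -> R) (v : V),
    is_sink E v ->
    `|fnn_eval E X a x w b v - fnn_eval E X a' x w b v|
      <= beta%:R * (norm_edge E w + 1) ^+ d
         * (norm_inp x + norm_node b + 1) * eps.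
Proof.
(* Acyclicity, the description of the sources and the sink hypothesis are not
   needed: every node has height at most d, and the bounds hold for any fuel. *)
move=> _ _ _ hd indeg_ge1 lam_gt0 lip_a eps_gt0 approx_a' lip_a' gamma beta x b w v _.
set D := maxindeg E; set mu := maxn lam (mu_of a).
have lam_ge1 : 1 <= lam%:R :> R by rewrite ler1n.
have D_ge1 : 1 <= D%:R :> R by rewrite ler1n.
have lam_le_mu : lam%:R <= mu%:R :> R by rewrite ler_nat leq_maxl.
have norm_a0 u : `|a u 0| <= mu%:R.
  by rewrite (le_trans (norm_at0_le_mu _ _)) // ler_nat leq_maxr.
have indeg_le u : #|[set u' | E u' u]|%:R <= D%:R :> R.
  by rewrite ler_nat card_preds_le_maxindeg.
have := fnn_eval_fuel_diff_le lam_ge1 lam_le_mu D_ge1 (norm_edge_ge0 E w)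
  (norm_inp_ge0 x) (norm_node_ge0 b) eps_gt0 lip_a approx_a' lip_a' norm_a0
  (norm_input_val_le X x) (norm_node_ge b) (norm_edge_ge w) indeg_le
  #|V| (depth_height_le (v := v) hd).
rewrite /fnn_eval => /le_trans; apply.
rewrite /beta /gamma !(natrX, natrM) -/D -/mu.
apply: error_bound_le_beta;
  rewrite ?addr_ge0 ?norm_edge_ge0 ?norm_inp_ge0 ?norm_node_ge0 //.
exact: depth_gt0 hd indeg_ge1.
Qed.
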